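(* A restriction semigroup is isomorphic (as a $(2,1,1)$-algebra) to a $W$-product $W(T,Y)$ of a semilattice $Y$ by a monoid $T$ if and only if it is proper and its underlying left partial action is an action (i.e. defined everywhere). In particular, a restriction semigroup is isomorphic to a semidirect product $T\ltimes Y$ of a semilattice by a monoid if and only if it is proper and its underlying left partial action is an action by order-automorphisms, equivalently, both its underlying left and right partial actions are (everywhere defined) actions.
   Context: A restriction semigroup is an algebra $(S,\cdot,{}^*,{}^+)$ where $(S,\cdot)$ is a semigroup and the identities $xx^*=x$, $x^*y^*=y^*x^*$, $(xy^* )^*=x^*y^*$, $x^*y=y(xy)^*$, $x^+x=x$, $x^+y^+=y^+x^+$, $(x^+y)^+=x^+y^+$, $xy^+=(xy)^+x$, $(x^+)^*=x^+$, $(x^* )^+=x^*$ hold. $P(S)=\{x^*\colon x\in S\}$ is the semilattice of projections; $\sigma$ is the least congruence identifying all projections; $S$ is proper if ($a^*=b^*$, $a\,\sigma\, b$) $\Rightarrow a=b$ and ($a^+=b^+$, $a\,\sigma\, b$) $\Rightarrow a=b$. For a proper restriction semigroup $S$, the underlying left partial action of $T=S/\sigma$ on $E=P(S)$ is: $t\cdot e$ is defined iff there is $a\in t$ with $a^*\ge e$, and then $t\cdot e=(ae)^+$. The underlying right partial action $\circ$ is its reverse: $e\circ t$ is defined iff $e=t\cdot f$ for some $f$ and then $e\circ t=f$. $W$-product: if a monoid $T$ acts on the left on a semilattice $Y$ (written $t*y$) by order-embeddings such that each range $t*Y$ is an order ideal of $Y$, then $W(T,Y)=\{(t*y,t)\colon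 y\in Y,t\in T\}$ with $(t*y,t)(s*x,s)=(t*y\wedge(ts)*x,ts)$, $(t*y,t)^*=(y,1)$, $(t*y,t)^+=(t*y,1)$. If the action is by order-automorphisms, $W(T,Y)$ is called the semidirect product $T\ltimes Y$ (as a set it is $Y\times T$). *)

Set Implicit Arguments.

Definition is_restriction_semigroup (S : Type)
  (mul : S -> S -> S) (star plus : S -> S) : Prop :=
  (forall x y z, mul x (mul y z) = mul (mul x y) z) /\
  (forall x, mul x (star x) = x) /\
  (forall x y, mul (star x) (star y) = mul (star y) (star x)) /\
  (forall x y, star (mul x (star y)) = mul (star x) (star y)) /\
  (forall x y, mul (star x) y = mul y (star (mul x y))) /\
  (forall x, mul (plus x) x = x) /\
  (forall x y, mul (plus x) (plus y) = mul (plus y) (plus x)) /\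
  (forall x y, plus (mul (plus x) y) = mul (plus x) (plus y)) /\
  (forall x y, mul x (plus y) = mul (plus (mul x y)) x) /\
  (forall x, star (plus x) = plus x) /\
  (forall x, plus (star x) = star x).

Section Restriction.
Variables (S : Type) (mul : S -> S -> S) (star plus : S -> S).

Definition projection (e : S) : Prop := exists x, e = star x.

Definition proj_le (e f : S) : Prop := e = mul e f.

Definition rs_congruence (R : S -> S -> Prop) : Prop :=
  (forall a, R a a) /\ (forall a b, R a b -> R b a) /\
  (forall a b c, R a b -> R b c -> R a c) /\
  (forall a b c d, R a b -> R c d -> R (mul a c) (mul b d)) /\
  (forall a b, R a b -> R (star a) (star b)) /\
  (forall a b, R a b -> R (plus a) (plus b)).

Definition sigma (a b : S) : Prop :=
  forall R, rs_congruence R ->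
    (forall e f, projection e -> projection f -> R e f) -> R a b.

Definition proper : Prop :=
  (forall a b, star a = star b -> sigma a b -> a = b) /\
  (forall a b, plus a = plus b -> sigma a b -> a = b).

(* Underlying left partial action of T = S/sigma on E = P(S); the
   sigma-class t is represented by any s in t.
   lpa_defined s e : t . e is defined  (t = [s]_sigma)
   lpa s e f       : t . e is defined and equals f. *)
Definition lpa_defined (s e : S) : Prop :=
  exists a, sigma a s /\ proj_le e (star a).

Definition lpa (s e f : S) : Prop :=
  exists a, sigma a s /\ proj_le e (star a) /\ f = plus (mul a e).

Definition left_action_total : Prop :=
  forall s e, projection e -> lpa_defined s e.

(* the underlying right partial action (reverse of the left one):
   e o t defined iff e = t . f for some f in E; it is an action iff
   it is defined everywhere *)
Definition right_action_total : Prop :=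
  forall s e, projection e -> exists f, projection f /\ lpa s f e.

(* the left partial action is an action by order-automorphisms of E:
   everywhere defined, each map e |-> t . e is onto E and preserves and
   reflects the order (hence is single-valued and injective). *)
Definition left_action_by_automorphisms : Prop :=
  left_action_total /\
  (forall s f, projection f -> exists e, projection e /\ lpa s e f) /\
  (forall s e e' f f', projection e -> projection e' ->
      lpa s e f -> lpa s e' f' -> (proj_le e e' <-> proj_le f f')).

End Restriction.

Definition is_monoid (T : Type) (op : T -> T -> T) (one : T) : Prop :=
  (forall x y z, op x (op y z) = op (op x y) z) /\
  (forall x, op one x = x) /\ (forall x, op x one = x).

Definition is_semilattice (Y : Type) (meet : Y -> Y -> Y) : Prop :=
  (forall x y z, meet x (meet y z) = meet (meet x y) z) /\
  (forall x y, meet x y = meet y x) /\ (forall x, meet x x = x).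

Definition sl_le (Y : Type) (meet : Y -> Y -> Y) (x y : Y) : Prop :=
  meet x y = x.

Definition is_monoid_action (T Y : Type) (op : T -> T -> T) (one : T)
  (act : T -> Y -> Y) : Prop :=
  (forall y, act one y = y) /\
  (forall t s y, act (op t s) y = act t (act s y)).

Definition W_action (T Y : Type) (op : T -> T -> T) (one : T)
  (meet : Y -> Y -> Y) (act : T -> Y -> Y) : Prop :=
  is_monoid_action op one act /\
  (forall t y z, sl_le meet (act t y) (act t z) <-> sl_le meet y z) /\
  (forall t y z, sl_le meet z (act t y) -> exists x, z = act t x).

Definition automorphism_action (T Y : Type) (op : T -> T -> T) (one : T)
  (meet : Y -> Y -> Y) (act : T -> Y -> Y) : Prop :=
  is_monoid_action op one act /\
  (forall t y z, sl_le meet (act t y) (act t z) <-> sl_le meet y z) /\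
  (forall t z, exists y, act t y = z).

Definition in_W (T Y : Type) (act : T -> Y -> Y) (p : Y * T) : Prop :=
  exists y t, p = (act t y, t).

Definition iso_onto_W (S : Type) (mul : S -> S -> S) (star plus : S -> S)
  (T Y : Type) (op : T -> T -> T) (one : T) (meet : Y -> Y -> Y)
  (act : T -> Y -> Y) (f : S -> Y * T) : Prop :=
  (forall a b, f a = f b -> a = b) /\
  (forall p, in_W act p <-> exists a, f a = p) /\
  (forall a b y t x s, f a = (act t y, t) -> f b = (act s x, s) ->
      f (mul a b) = (meet (act t y) (act (op t s) x), op t s)) /\
  (forall a y t, f a = (act t y, t) ->
      f (star a) = (y, one) /\ f (plus a) = (act t y, one)).

Definition isomorphic_to_W_product (S : Type) (mul : S -> S -> S)
  (star plus : S -> S) : Prop :=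
  exists (T : Type) (op : T -> T -> T) (one : T)
         (Y : Type) (meet : Y -> Y -> Y) (act : T -> Y -> Y) (f : S -> Y * T),
    is_monoid op one /\ is_semilattice meet /\ W_action op one meet act /\
    iso_onto_W mul star plus op one meet act f.

(* semidirect product T |x Y = W(T,Y) for an action by order-automorphisms *)
Definition isomorphic_to_semidirect_product (S : Type) (mul : S -> S -> S)
  (star plus : S -> S) : Prop :=
  exists (T : Type) (op : T -> T -> T) (one : T)
         (Y : Type) (meet : Y -> Y -> Y) (act : T -> Y -> Y) (f : S -> Y * T),
    is_monoid op one /\ is_semilattice meet /\
    automorphism_action op one meet act /\
    iso_onto_W mul star plus op one meet act f.

From Stdlib Require Import Classical ClassicalEpsilon FunctionalExtensionality
  PropExtensionality ProofIrrelevance.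
Set Implicit Arguments.

(* If S is isomorphic to W(T,Y), then sigma is the kernel of the projection
   onto T, which makes S proper, and (t*y, t)(z, 1) = (t*y /\ t*z, t) shows
   that t . z is always defined.  Conversely, if S is proper and t . e is
   always defined, then for every sigma-class t and projection y there is a
   unique u in t with u^* = y; setting t*y := u^+ gives an action of S/sigma
   on P(S) by order-embeddings with order-ideal ranges, and a |-> (a^+, [a])
   is an isomorphism onto W(S/sigma, P(S)).  The action is by automorphisms
   exactly when every t*y is attained, i.e. when the right partial action
   is total. *)

Lemma automorphism_action_W (T Y : Type) (op : T -> T -> T) (one : T)
  (meet : Y -> Y -> Y) (act : T -> Y -> Y) :
  automorphism_action op one meet act -> W_action op one meet act.
Proof.
  intros (Hact & Hemb & Hsurj). split; [exact Hact | split; [exact Hemb |]].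
  intros t y z _. destruct (Hsurj t z) as [x <-]. now exists x.
Qed.

Lemma semidirect_W_product (S : Type) (mul : S -> S -> S) (star plus : S -> S) :
  isomorphic_to_semidirect_product mul star plus -> isomorphic_to_W_product mul star plus.
Proof.
  intros (T & op & one & Y & meet & act & f & Hmon & Hsl & Haut & Hiso).
  exists T, op, one, Y, meet, act, f. auto using automorphism_action_W.
Qed.

Lemma empty_semidirect_product (S : Type) (mul : S -> S -> S) (star plus : S -> S) :
  ~ inhabited S -> isomorphic_to_semidirect_product mul star plus.
Proof.
  intro Hempty.
  assert (absurd : S -> Empty_set * unit) by (intro a; exfalso; exact (Hempty (inhabits a))).
  exists unit, (fun _ _ => tt), tt, Empty_set, (fun y _ => y), (fun _ y => y), absurd.
  repeat split; intros;
    repeat match goal with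
    | a : S |- _ => destruct (Hempty (inhabits a))
    | p : Empty_set * unit |- _ => destruct p as [[] _]
    | y : Empty_set |- _ => destruct y
    | t : unit |- _ => destruct t
    end; reflexivity.
Qed.

Section RestrictionSemigroup.
Variables (S : Type) (mul : S -> S -> S) (star plus : S -> S).
Hypothesis HS : is_restriction_semigroup mul star plus.

Local Notation sg := (sigma mul star plus).

Lemma mulA x y z : mul x (mul y z) = mul (mul x y) z.
Proof. apply HS. Qed.
Lemma mul_star x : mul x (star x) = x.
Proof. apply HS. Qed.
Lemma star_mulC x y : mul (star x) (star y) = mul (star y) (star x).
Proof. apply HS. Qed.
Lemma star_mul_star x y : star (mul x (star y)) = mul (star x) (star y).
Proof. apply HS. Qed.
Lemma star_ample x y : mul (star x) y = mul y (star (mul x y)).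
Proof. apply HS. Qed.
Lemma plus_mul x : mul (plus x) x = x.
Proof. apply HS. Qed.
Lemma plus_mulC x y : mul (plus x) (plus y) = mul (plus y) (plus x).
Proof. apply HS. Qed.
Lemma plus_plus_mul x y : plus (mul (plus x) y) = mul (plus x) (plus y).
Proof. apply HS. Qed.
Lemma plus_ample x y : mul x (plus y) = mul (plus (mul x y)) x.
Proof. apply HS. Qed.
Lemma star_plus x : star (plus x) = plus x.
Proof. apply HS. Qed.
Lemma plus_star x : plus (star x) = star x.
Proof. apply HS. Qed.

Definition is_proj (e : S) : Prop := star e = e.

Lemma proj_star x : is_proj (star x).
Proof. unfold is_proj. rewrite <- (plus_star x) at 1. rewrite star_plus. apply plus_star. Qed.

Lemma proj_plus x : is_proj (plus x).
Proof. apply star_plus. Qed.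

Lemma projection_iff e : projection star e <-> is_proj e.
Proof.
  split.
  - intros [x ->]. apply proj_star.
  - intro He. exists e. now rewrite He.
Qed.

Lemma plus_proj e : is_proj e -> plus e = e.
Proof. intro He. rewrite <- He. apply plus_star. Qed.

Lemma proj_idem e : is_proj e -> mul e e = e.
Proof. unfold is_proj. intro He. rewrite <- He at 2. apply mul_star. Qed.

Lemma proj_comm e f : is_proj e -> is_proj f -> mul e f = mul f e.
Proof. intros He Hf. rewrite <- He, <- Hf. apply star_mulC. Qed.

Lemma star_mul_proj a e : is_proj e -> star (mul a e) = mul (star a) e.
Proof.
  unfold is_proj. intro He. rewrite <- He at 1 2. rewrite star_mul_star. now rewrite He.
Qed.

Lemma plus_proj_mul e a : is_proj e -> plus (mul e a) = mul e (plus a).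
Proof. intro He. rewrite <- (plus_proj He) at 1 2. apply plus_plus_mul. Qed.

Lemma proj_mul e f : is_proj e -> is_proj f -> is_proj (mul e f).
Proof. intros He Hf. unfold is_proj. rewrite star_mul_proj by exact Hf. now rewrite He. Qed.

Lemma star_mul_le x y : star (mul x y) = mul (star (mul x y)) (star y).
Proof. rewrite <- star_mul_star. now rewrite <- mulA, mul_star. Qed.

Lemma plus_mul_le x y : plus (mul x y) = mul (plus x) (plus (mul x y)).
Proof. rewrite <- plus_plus_mul. now rewrite mulA, plus_mul. Qed.

Lemma plus_mul_plus x y : plus (mul x (plus y)) = plus (mul x y).
Proof. rewrite plus_ample, plus_plus_mul, plus_mulC. symmetry. apply plus_mul_le. Qed.

Lemma star_star_mul x y : star (mul (star x) y) = star (mul x y).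
Proof. rewrite star_ample, star_mul_star, star_mulC. symmetry. apply star_mul_le. Qed.

Lemma sigma_congruence : rs_congruence mul star plus sg.
Proof.
  unfold sigma. repeat split.
  - intros a R HR _. destruct HR as [Hrefl _]. apply Hrefl.
  - intros a b Hab R HR Hproj. specialize (Hab R HR Hproj).
    destruct HR as (_ & Hsym & _). auto.
  - intros a b c Hab Hbc R HR Hproj.
    specialize (Hab R HR Hproj). specialize (Hbc R HR Hproj).
    destruct HR as (_ & _ & Htrans & _). eauto.
  - intros a b c d Hab Hcd R HR Hproj.
    specialize (Hab R HR Hproj). specialize (Hcd R HR Hproj).
    destruct HR as (_ & _ & _ & Hmul & _). auto.
  - intros a b Hab R HR Hproj. specialize (Hab R HR Hproj).
    destruct HR as (_ & _ & _ & _ & Hstar & _). auto.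
  - intros a b Hab R HR Hproj. specialize (Hab R HR Hproj).
    destruct HR as (_ & _ & _ & _ & _ & Hplus). auto.
Qed.

Lemma sigma_refl a : sg a a.
Proof. destruct sigma_congruence as [Hrefl _]. apply Hrefl. Qed.
Lemma sigma_sym a b : sg a b -> sg b a.
Proof. destruct sigma_congruence as (_ & Hsym & _). apply Hsym. Qed.
Lemma sigma_trans a b c : sg a b -> sg b c -> sg a c.
Proof. destruct sigma_congruence as (_ & _ & Htrans & _). apply Htrans. Qed.
Lemma sigma_mul a b c d : sg a b -> sg c d -> sg (mul a c) (mul b d).
Proof. destruct sigma_congruence as (_ & _ & _ & Hmul & _). apply Hmul. Qed.

Lemma sigma_proj e f : is_proj e -> is_proj f -> sg e f.
Proof. intros He Hf R _ Hproj. apply Hproj; apply projection_iff; assumption. Qed.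

Lemma sigma_mul_proj_r a e : is_proj e -> sg (mul a e) a.
Proof.
  intro He. rewrite <- (mul_star a) at 2.
  apply sigma_mul; [apply sigma_refl | apply sigma_proj; [exact He | apply proj_star]].
Qed.

Lemma sigma_mul_proj_l e a : is_proj e -> sg (mul e a) a.
Proof.
  intro He. rewrite <- (plus_mul a) at 2.
  apply sigma_mul; [apply sigma_proj; [exact He | apply proj_plus] | apply sigma_refl].
Qed.

Section Proper.
Hypothesis Hproper : proper mul star plus.

Lemma proper_star a b : star a = star b -> sg a b -> a = b.
Proof. apply Hproper. Qed.
Lemma proper_plus a b : plus a = plus b -> sg a b -> a = b.
Proof. apply Hproper. Qed.

Lemma sigma_compat_plus a w : sg w a -> mul (plus a) w = mul (plus w) a.
Proof.
  intro Hwa. apply proper_plus.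
  - rewrite !plus_plus_mul. apply plus_mulC.
  - apply (sigma_trans (sigma_mul_proj_l _ (proj_plus a))).
    apply (sigma_trans Hwa), sigma_sym, sigma_mul_proj_l, proj_plus.
Qed.

Lemma sigma_compat_star a w : sg w a -> mul w (star a) = mul a (star w).
Proof.
  intro Hwa. apply proper_star.
  - rewrite !star_mul_star. apply star_mulC.
  - apply (sigma_trans (sigma_mul_proj_r _ (proj_star a))).
    apply (sigma_trans Hwa), sigma_sym, sigma_mul_proj_r, proj_star.
Qed.

Lemma plus_mul_sigma a b w :
  sg w a -> star w = plus b -> plus (mul a b) = mul (plus a) (plus w).
Proof.
  intros Hwa Hw.
  assert (E : mul a (star w) = mul (plus w) a).
  { rewrite <- (plus_mul a) at 1. rewrite <- mulA, <- (sigma_compat_star Hwa).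
    rewrite mulA, (sigma_compat_plus Hwa), <- mulA. now rewrite mul_star. }
  rewrite <- plus_mul_plus, <- Hw, E, plus_plus_mul. apply plus_mulC.
Qed.

End Proper.

Section WProductImage.
Variables (T Y : Type) (op : T -> T -> T) (one : T) (meet : Y -> Y -> Y)
  (act : T -> Y -> Y) (f : S -> Y * T).
Hypotheses (Hmon : is_monoid op one) (Hsl : is_semilattice meet)
  (Hact : is_monoid_action op one act)
  (Hiso : iso_onto_W mul star plus op one meet act f).

Lemma f_inj a b : f a = f b -> a = b.
Proof. apply Hiso. Qed.
Lemma f_in_W a : exists y t, f a = (act t y, t).
Proof. apply (proj1 (proj2 Hiso)). now exists a. Qed.
Lemma f_onto p : in_W act p -> exists a, f a = p.
Proof. apply Hiso. Qed.
Lemma f_mul a b y t x s : f a = (act t y, t) -> f b = (act s x, s) ->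
  f (mul a b) = (meet (act t y) (act (op t s) x), op t s).
Proof. apply Hiso. Qed.
Lemma f_star a y t : f a = (act t y, t) -> f (star a) = (y, one).
Proof. intro Ha. apply (proj2 (proj2 (proj2 Hiso)) a y t Ha). Qed.
Lemma f_plus a y t : f a = (act t y, t) -> f (plus a) = (act t y, one).
Proof. intro Ha. apply (proj2 (proj2 (proj2 Hiso)) a y t Ha). Qed.

Lemma f_proj e : projection star e -> exists z, f e = (z, one).
Proof. intros [x ->]. destruct (f_in_W x) as (y & t & Hx). exists y. exact (f_star Hx). Qed.

Lemma f_mul_proj a e y t z : f a = (act t y, t) -> f e = (z, one) ->
  f (mul a e) = (meet (act t y) (act t z), t).
Proof.
  intros Ha He. destruct Hmon as (_ & _ & op1). destruct Hact as [act1 _].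
  rewrite <- (act1 z) in He. rewrite (f_mul Ha He). now rewrite op1.
Qed.

Lemma f_mul_projs e e' z z' : f e = (z, one) -> f e' = (z', one) ->
  f (mul e e') = (meet z z', one).
Proof.
  intros He He'. destruct Hact as [act1 _]. rewrite <- (act1 z) in He.
  rewrite (f_mul_proj He He'). now rewrite !act1.
Qed.

Lemma proj_le_iff e e' z z' : f e = (z, one) -> f e' = (z', one) ->
  (proj_le mul e e' <-> sl_le meet z z').
Proof.
  intros He He'. unfold proj_le, sl_le. split.
  - intro E. pose proof (f_mul_projs He He') as K. rewrite <- E, He in K.
    now injection K.
  - intro E. apply f_inj. now rewrite (f_mul_projs He He'), He, E.
Qed.

Lemma snd_f_mul a b : snd (f (mul a b)) = op (snd (f a)) (snd (f b)).
Proof.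
  destruct (f_in_W a) as (y & t & Ea), (f_in_W b) as (x & s & Eb).
  now rewrite (f_mul Ea Eb), Ea, Eb.
Qed.
Lemma snd_f_star a : snd (f (star a)) = one.
Proof. destruct (f_in_W a) as (y & t & Ea). now rewrite (f_star Ea). Qed.
Lemma snd_f_plus a : snd (f (plus a)) = one.
Proof. destruct (f_in_W a) as (y & t & Ea). now rewrite (f_plus Ea). Qed.

Lemma sigma_iff_snd a b : sg a b <-> snd (f a) = snd (f b).
Proof.
  split.
  - intro Hab. apply (Hab (fun a b => snd (f a) = snd (f b))).
    + repeat split; intros; rewrite ?snd_f_mul, ?snd_f_star, ?snd_f_plus; congruence.
    + intros e e' [x ->] [x' ->]. now rewrite !snd_f_star.
  - intro Hs.
    destruct (f_in_W a) as (y & t & Ea), (f_in_W b) as (x & s & Eb).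
    rewrite Ea, Eb in Hs. simpl in Hs. subst s.
    assert (E : mul a (star b) = mul b (star a)).
    { apply f_inj. rewrite (f_mul_proj Ea (f_star Eb)), (f_mul_proj Eb (f_star Ea)).
      f_equal. apply Hsl. }
    apply (sigma_trans (sigma_sym (sigma_mul_proj_r a (proj_star b)))).
    rewrite E. apply sigma_mul_proj_r, proj_star.
Qed.

Lemma W_image_proper : proper mul star plus.
Proof.
  split; intros a b Hst Hab; apply f_inj; rewrite sigma_iff_snd in Hab;
    destruct (f_in_W a) as (y & t & Ea), (f_in_W b) as (x & s & Eb);
    rewrite Ea, Eb in Hab |- *; simpl in Hab; subst s.
  - pose proof (f_star Ea) as Sa. rewrite Hst, (f_star Eb) in Sa.
    injection Sa as ->. reflexivity.
  - pose proof (f_plus Ea) as Pa. rewrite Hst, (f_plus Eb) in Pa.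
    injection Pa as ->. reflexivity.
Qed.

Lemma W_image_left_action_total : left_action_total mul star plus.
Proof.
  intros s e He. destruct (f_proj He) as [z Hz], (f_in_W s) as (w & t & Hs).
  destruct (@f_onto (act t z, t)) as [a Ha]; [now exists z, t|].
  exists a. split.
  - rewrite sigma_iff_snd. now rewrite Ha, Hs.
  - apply (proj_le_iff Hz (f_star Ha)). apply Hsl.
Qed.

Section Automorphisms.
Hypothesis Hemb : forall t y z, sl_le meet (act t y) (act t z) <-> sl_le meet y z.
Hypothesis Hsurj : forall t z, exists y, act t y = z.

Lemma W_image_right_action_total : right_action_total mul star plus.
Proof.
  intros s e He. destruct (f_proj He) as [z Hz], (f_in_W s) as (w & t & Hs).
  destruct (Hsurj t z) as [y Hy].
  destruct (@f_onto (act t y, t)) as [a Ha]; [now exists y, t|].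
  exists (star a). split; [now exists a|].
  exists a. repeat split.
  - rewrite sigma_iff_snd. now rewrite Ha, Hs.
  - symmetry. apply proj_idem, proj_star.
  - rewrite mul_star. apply f_inj. now rewrite (f_plus Ha), Hy.
Qed.

Lemma f_lpa s e g w t z : f s = (act t w, t) -> f e = (z, one) ->
  lpa mul star plus s e g -> f g = (act t z, one).
Proof.
  intros Hs He (a & Has & Hle & ->).
  destruct (f_in_W a) as (y & t' & Ea).
  assert (t' = t) as ->.
  { rewrite sigma_iff_snd in Has. now rewrite Ea, Hs in Has. }
  apply (f_plus (y := z)). rewrite (f_mul_proj Ea He). f_equal.
  rewrite (proj_le_iff He (f_star Ea)), <- (Hemb t) in Hle.
  unfold sl_le in Hle. rewrite <- Hle at 2. apply Hsl.
Qed.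

Lemma W_image_left_action_by_automorphisms :
  left_action_by_automorphisms mul star plus.
Proof.
  split; [exact W_image_left_action_total|].
  split; [exact W_image_right_action_total|].
  intros s e e' g g' He He' Hg Hg'.
  destruct (f_proj He) as [z Hz], (f_proj He') as [z' Hz'], (f_in_W s) as (w & t & Hs).
  rewrite (proj_le_iff Hz Hz'), (proj_le_iff (f_lpa Hs Hz Hg) (f_lpa Hs Hz' Hg')).
  symmetry. apply Hemb.
Qed.

End Automorphisms.
End WProductImage.

Section Quotient.
Hypotheses (Hproper : proper mul star plus) (Htotal : left_action_total mul star plus).

Record sigma_class := SigmaClass {
  class_mem :> S -> Prop;
  class_memP : exists c, forall a, class_mem a <-> sg a c }.

Lemma sigma_class_ext (t u : sigma_class) : (forall a, t a <-> u a) -> t = u.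
Proof.
  destruct t as [P HP], u as [Q HQ]. simpl. intro E.
  assert (P = Q) as <-.
  { apply functional_extensionality. intro a. apply propositional_extensionality, E. }
  f_equal. apply proof_irrelevance.
Qed.

Definition class_of (c : S) : sigma_class :=
  @SigmaClass (fun a => sg a c) (ex_intro _ c (fun a => iff_refl _)).

Lemma class_of_eq a b : class_of a = class_of b <-> sg a b.
Proof.
  split.
  - intro E. apply (f_equal (fun t : sigma_class => t a)) in E. simpl in E.
    rewrite <- E. apply sigma_refl.
  - intro Hab. apply sigma_class_ext. intro c. simpl. split; intro Hc.
    + exact (sigma_trans Hc Hab).
    + exact (sigma_trans Hc (sigma_sym Hab)).
Qed.

Lemma class_of_surj (t : sigma_class) : exists c, t = class_of c.
Proof. destruct t as [P [c Hc]]. exists c. now apply sigma_class_ext. Qed.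

Definition rep (t : sigma_class) : S :=
  proj1_sig (constructive_indefinite_description _ (class_of_surj t)).

Lemma class_of_rep t : class_of (rep t) = t.
Proof. unfold rep. now destruct (constructive_indefinite_description _ _). Qed.

Definition class_mul (t u : sigma_class) : sigma_class := class_of (mul (rep t) (rep u)).

Lemma class_mul_of a b : class_mul (class_of a) (class_of b) = class_of (mul a b).
Proof.
  apply class_of_eq, sigma_mul; apply class_of_eq; apply class_of_rep.
Qed.

Record proj := Proj { proj_val :> S; proj_valP : is_proj proj_val }.

Lemma proj_eq (y z : proj) : proj_val y = proj_val z -> y = z.
Proof. destruct y, z. simpl. intros ->. f_equal. apply proof_irrelevance. Qed.

Definition pstar (a : S) : proj := Proj (proj_star a).
Definition pplus (a : S) : proj := Proj (proj_plus a).
Definition proj_meet (y z : proj) : proj := Proj (proj_mul (proj_valP y) (proj_valP z)).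

Lemma proj_semilattice : is_semilattice proj_meet.
Proof.
  repeat split; intros; apply proj_eq; simpl.
  - apply mulA.
  - apply proj_comm; apply proj_valP.
  - apply proj_idem, proj_valP.
Qed.

Lemma lift_exists t (y : proj) : exists u, class_of u = t /\ star u = y.
Proof.
  destruct (class_of_surj t) as [c ->].
  destruct (Htotal c (proj2 (projection_iff y) (proj_valP y))) as [a [Hac Hle]].
  exists (mul a y). split.
  - apply class_of_eq. exact (sigma_trans (sigma_mul_proj_r a (proj_valP y)) Hac).
  - rewrite star_mul_proj by apply proj_valP.
    rewrite proj_comm by (apply proj_star || apply proj_valP). now symmetry.
Qed.

Lemma lift_unique u v : class_of u = class_of v -> star u = star v -> u = v.
Proof.
  intros Hc Hs. apply proper_star; [exact Hproper | exact Hs | now apply class_of_eq].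
Qed.

Definition lift t y : S := proj1_sig (constructive_indefinite_description _ (lift_exists t y)).

Lemma lift_spec t y : class_of (lift t y) = t /\ star (lift t y) = y.
Proof. unfold lift. now destruct (constructive_indefinite_description _ _). Qed.

Lemma lift_eq {t} {y : proj} {u} : class_of u = t -> star u = y -> lift t y = u.
Proof.
  intros Hc Hs. destruct (lift_spec t y) as [Hc' Hs'].
  apply lift_unique; congruence.
Qed.

Definition class_act t y : proj := pplus (lift t y).

Lemma class_act_val {u t} {y : proj} :
  class_of u = t -> star u = y -> class_act t y = plus u :> S.
Proof. intros Hc Hs. simpl. now rewrite (lift_eq Hc Hs). Qed.

Lemma class_act_of a : class_act (class_of a) (pstar a) = pplus a.
Proof. apply proj_eq. now apply class_act_val. Qed.

Lemma class_act_mul t s y : class_act (class_mul t s) y = class_act t (class_act s y).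
Proof.
  destruct (lift_spec s y) as [Hu1 Hu2], (lift_spec t (class_act s y)) as [Hv1 Hv2].
  set (u := lift s y) in *. set (v := lift t (class_act s y)) in *.
  change (star v = plus u) in Hv2.
  apply proj_eq. rewrite (class_act_val (u := mul v u)).
  - change (plus (mul v u) = plus v).
    rewrite <- plus_mul_plus, <- Hv2. now rewrite mul_star.
  - now rewrite <- class_mul_of, Hu1, Hv1.
  - now rewrite <- star_star_mul, Hv2, plus_mul.
Qed.

Lemma class_act_le t y z :
  sl_le proj_meet (class_act t y) (class_act t z) <-> sl_le proj_meet y z.
Proof.
  destruct (lift_spec t y) as [Hu1 Hu2], (lift_spec t z) as [Hw1 Hw2].
  set (u := lift t y) in *. set (w := lift t z) in *.
  unfold sl_le. split; intro H; apply proj_eq; apply (f_equal proj_val) in H; simpl in *;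
    fold u w in H |- *.
  - assert (Hu : mul (plus u) w = u).
    { rewrite (sigma_compat_plus Hproper); [|apply class_of_eq; congruence].
      rewrite <- (plus_mul u) at 1. rewrite mulA, plus_mulC, H. apply plus_mul. }
    rewrite <- Hu2, <- Hw2, <- Hu. symmetry. apply star_mul_le.
  - assert (Hu : u = mul w y).
    { apply lift_eq.
      + rewrite <- Hw1. apply class_of_eq, sigma_mul_proj_r, proj_valP.
      + rewrite star_mul_proj, Hw2 by apply proj_valP.
        rewrite proj_comm by apply proj_valP. exact H. }
    rewrite Hu, plus_mulC. symmetry. apply plus_mul_le.
Qed.

Lemma class_act_ideal t y z :
  sl_le proj_meet z (class_act t y) -> exists x, z = class_act t x.
Proof.
  intro H. destruct (lift_spec t y) as [Hu1 _]. set (u := lift t y) in *.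
  apply (f_equal proj_val) in H. change (mul z (plus u) = z) in H.
  exists (pstar (mul z u)). apply proj_eq.
  rewrite (class_act_val (u := mul z u)); [| |reflexivity].
  - rewrite plus_proj_mul by apply proj_valP. now symmetry.
  - rewrite <- Hu1. apply class_of_eq, sigma_mul_proj_l, proj_valP.
Qed.

Definition to_W (a : S) : proj * sigma_class := (pplus a, class_of a).

Lemma to_W_form a t y : to_W a = (class_act t y, t) -> t = class_of a /\ y = pstar a.
Proof.
  intro H. injection H as Hp Hc. subst t.
  assert (E : lift (class_of a) y = a).
  { apply proper_plus; [exact Hproper| |].
    - now symmetry.
    - apply class_of_eq, lift_spec. }
  split; [reflexivity|]. apply proj_eq. simpl. rewrite <- E. symmetry. apply lift_spec.
Qed.

Section Unit.
Variable s0 : S.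

(* The identity of S/sigma is the class of projections; naming it needs an
   element of S, which is why the empty semigroup is treated separately. *)
Definition class_one : sigma_class := class_of (star s0).

Lemma class_of_proj e : is_proj e -> class_of e = class_one.
Proof. intro He. apply class_of_eq, sigma_proj; [exact He | apply proj_star]. Qed.

Lemma class_monoid : is_monoid class_mul class_one.
Proof.
  repeat split.
  - intros x y z. destruct (class_of_surj x) as [a ->], (class_of_surj y) as [b ->],
      (class_of_surj z) as [c ->]. rewrite !class_mul_of. now rewrite mulA.
  - intro x. destruct (class_of_surj x) as [a ->]. unfold class_one.
    rewrite class_mul_of. apply class_of_eq, sigma_mul_proj_l, proj_star.
  - intro x. destruct (class_of_surj x) as [a ->]. unfold class_one.
    rewrite class_mul_of. apply class_of_eq, sigma_mul_proj_r, proj_star.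
Qed.

Lemma class_act_one y : class_act class_one y = y.
Proof.
  apply proj_eq. rewrite (class_act_val (u := y)).
  - apply plus_proj, proj_valP.
  - apply class_of_proj, proj_valP.
  - apply proj_valP.
Qed.

Lemma class_W_action : W_action class_mul class_one proj_meet class_act.
Proof.
  split; [split|split].
  - exact class_act_one.
  - exact class_act_mul.
  - exact class_act_le.
  - exact class_act_ideal.
Qed.

Lemma to_W_iso : iso_onto_W mul star plus class_mul class_one proj_meet class_act to_W.
Proof.
  split; [|split; [|split]].
  - intros a b H. apply proper_plus; [exact Hproper | |].
    + exact (f_equal (fun p => proj_val (fst p)) H).
    + apply class_of_eq. exact (f_equal snd H).
  - intro p. split.
    + intros (y & t & ->). exists (lift t y). unfold to_W.
      destruct (lift_spec t y) as [-> _]. reflexivity.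
    + intros [a <-]. exists (pstar a), (class_of a). now rewrite class_act_of.
  - intros a b y t x s Ha Hb.
    destruct (to_W_form Ha) as [-> ->], (to_W_form Hb) as [-> ->].
    rewrite class_mul_of, class_act_of. unfold to_W. f_equal.
    apply proj_eq. cbn [proj_val pplus proj_meet].
    destruct (lift_spec (class_of a) (pplus b)) as [Hw1 Hw2].
    set (w := lift (class_of a) (pplus b)) in *. change (star w = plus b) in Hw2.
    rewrite (class_act_val (u := mul w b)).
    + rewrite <- (plus_mul_plus w b), <- Hw2, mul_star.
      apply (plus_mul_sigma Hproper); [apply class_of_eq, Hw1 | exact Hw2].
    + apply class_of_eq, sigma_mul, sigma_refl. now apply class_of_eq.
    + now rewrite <- star_star_mul, Hw2, plus_mul.
  - intros a y t Ha. destruct (to_W_form Ha) as [-> ->]. unfold to_W.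
    rewrite class_act_of. split; f_equal.
    + apply proj_eq, plus_star.
    + apply class_of_proj, proj_star.
    + apply proj_eq, plus_proj, proj_plus.
    + apply class_of_proj, proj_plus.
Qed.

Lemma quotient_W_product : isomorphic_to_W_product mul star plus.
Proof.
  exists sigma_class, class_mul, class_one, proj, proj_meet, class_act, to_W.
  exact (conj class_monoid (conj proj_semilattice (conj class_W_action to_W_iso))).
Qed.

Lemma quotient_semidirect_product :
  right_action_total mul star plus -> isomorphic_to_semidirect_product mul star plus.
Proof.
  intro Hright.
  exists sigma_class, class_mul, class_one, proj, proj_meet, class_act, to_W.
  split; [exact class_monoid | split; [exact proj_semilattice | split; [|exact to_W_iso]]].
  split; [apply class_W_action | split; [exact class_act_le |]].
  intros t z. destruct (class_of_surj t) as [c ->].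
  destruct (Hright c z (proj2 (projection_iff z) (proj_valP z)))
    as (e & He & a & Hac & Hle & Hz).
  apply projection_iff in He. exists (Proj He). apply proj_eq.
  rewrite (class_act_val (u := mul a e)); [now symmetry| |].
  - apply class_of_eq. exact (sigma_trans (sigma_mul_proj_r a He) Hac).
  - simpl. rewrite star_mul_proj by exact He.
    rewrite proj_comm by (apply proj_star || exact He). now symmetry.
Qed.

End Unit.
End Quotient.
Lemma W_product_sound :
  isomorphic_to_W_product mul star plus ->
  proper mul star plus /\ left_action_total mul star plus.
Proof.
  intros (T & op & one & Y & meet & act & f & Hmon & Hsl & [Hact _] & Hiso).
  split; [exact (W_image_proper Hmon Hsl Hact Hiso) |].
  exact (W_image_left_action_total Hmon Hsl Hact Hiso).
Qed.

Lemma semidirect_sound :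
  isomorphic_to_semidirect_product mul star plus ->
  proper mul star plus /\ left_action_by_automorphisms mul star plus.
Proof.
  intros (T & op & one & Y & meet & act & f & Hmon & Hsl & (Hact & Hemb & Hsurj) & Hiso).
  split; [exact (W_image_proper Hmon Hsl Hact Hiso) |].
  exact (W_image_left_action_by_automorphisms Hmon Hsl Hact Hiso Hemb Hsurj).
Qed.

Lemma W_product_complete :
  proper mul star plus -> left_action_total mul star plus ->
  isomorphic_to_W_product mul star plus.
Proof.
  intros Hproper Htotal. destruct (classic (inhabited S)) as [[s0] | Hempty].
  - exact (quotient_W_product Hproper Htotal s0).
  - exact (semidirect_W_product (empty_semidirect_product mul star plus Hempty)).
Qed.

Lemma semidirect_complete :
  proper mul star plus -> left_action_total mul star plus ->
  right_action_total mul star plus -> isomorphic_to_semidirect_product mul star plus.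
Proof.
  intros Hproper Htotal Hright. destruct (classic (inhabited S)) as [[s0] | Hempty].
  - exact (quotient_semidirect_product Hproper Htotal s0 Hright).
  - exact (empty_semidirect_product mul star plus Hempty).
Qed.

End RestrictionSemigroup.

Theorem proposition3p3 (S : Type) (mul : S -> S -> S) (star plus : S -> S)
  (HS : is_restriction_semigroup mul star plus) :
  (isomorphic_to_W_product mul star plus <->
     proper mul star plus /\ left_action_total mul star plus) /\
  (isomorphic_to_semidirect_product mul star plus <->
     proper mul star plus /\ left_action_by_automorphisms mul star plus) /\
  (isomorphic_to_semidirect_product mul star plus <->
     proper mul star plus /\ left_action_total mul star plus /\
     right_action_total mul star plus).
Proof.
  split; [|split].
  - split; [exact (W_product_sound HS) | intros [Hp Ht]; exact (W_product_complete HS Hp Ht)].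
  - split; [exact (semidirect_sound HS) |].
    intros [Hp (Ht & Hr & _)]. exact (semidirect_complete HS Hp Ht Hr).
  - split.
    + intro Hsd. destruct (semidirect_sound HS Hsd) as [Hp (Ht & Hr & _)]. auto.
    + intros (Hp & Ht & Hr). exact (semidirect_complete HS Hp Ht Hr).
Qed.
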